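(* Every RPA-recognizable $\omega$-language is RPBA-recognizable, and there is an RPBA-recognizable $\omega$-language that is not RPA-recognizable.
   Context: A Parikh automaton of dimension $d$ is $\mathcal{A}=(Q,\Sigma,q_0,\Delta,F,C)$ with finite $Q$, $q_0\in Q$, $F\subseteq Q$, finite $\Delta\subseteq Q\times\Sigma\times\mathbb{N}^d\times Q$ and semi-linear $C\subseteq\mathbb{N}^d$ (a finite union of sets $\{b_0+\sum_{j=1}^\ell b_jz_j\mid z_j\in\mathbb{N}\}$, $b_j\in\mathbb{N}^d$). A run on an infinite word $\alpha$ is $r_1r_2\cdots$ with $r_i=(p_{i-1},\alpha_i,\mathbf{v}_i,p_i)\in\Delta$, $p_0=q_0$, and $\rho(r_1\cdots r_i)=\sum_{k\le i}\mathbf{v}_k$. For an RPA (reachability Parikh automaton) the run is accepting if there is $i\ge1$ with $p_i\in F$ and $\rho(r_1\cdots r_i)\in C$. For an RPBA (reachability Parikh–Büchi automaton) the run is accepting if there is $i\ge1$ with $p_i\in F$ and $\rho(r_1\cdots r_i)\in C$, and additionally there are infinitely many $j$ with $p_j\in F$. An $\omega$-language is X-recognizable if it equals the set of infinite words with an accepting run of some automaton of type X. *)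

From Stdlib Require List.
From mathcomp Require Import all_boot.
Set Implicit Arguments. Unset Strict Implicit. Unset Printing Implicit Defensive.

Definition vec (d : nat) := 'I_d -> nat.

(* A linear set {b0 + sum_j b_j z_j | z_j in N}, given by (b0, [b_1; ...; b_l]). *)
Definition in_linear (d : nat) (L : vec d * seq (vec d)) (v : vec d) : Prop :=
  exists z : nat -> nat,
    forall i : 'I_d,
      v i = L.1 i + \sum_(j < size L.2) z j * (nth (fun _ => 0) L.2 j) i.

Definition in_semilinear (d : nat) (C : seq (vec d * seq (vec d))) (v : vec d) : Prop :=
  exists2 L, List.In L C & in_linear L v.

Record PA (Sigma : Type) := {
  pa_dim : nat;
  pa_Q : finType;
  pa_q0 : pa_Q;
  pa_Delta : seq (pa_Q * Sigma * vec pa_dim * pa_Q);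
  pa_F : {set pa_Q};
  pa_C : seq (vec pa_dim * seq (vec pa_dim))
}.

Definition psum (d : nat) (v : nat -> vec d) (i : nat) : vec d :=
  fun k => \sum_(j < i) v j k.

(* A run on alpha (0-indexed: alpha n is the (n+1)-th letter) given by the
   state sequence p (p 0 = q0) and vector sequence v, where the (n+1)-th
   transition is (p n, alpha n, v n, p (n+1)). *)
Definition is_run (Sigma : Type) (A : PA Sigma) (alpha : nat -> Sigma)
  (p : nat -> pa_Q A) (v : nat -> vec (pa_dim A)) : Prop :=
  p 0 = pa_q0 A /\ forall n, List.In (p n, alpha n, v n, p n.+1) (pa_Delta A).

Definition reach_cond (Sigma : Type) (A : PA Sigma)
  (p : nat -> pa_Q A) (v : nat -> vec (pa_dim A)) : Prop :=
  exists i, 1 <= i /\ p i \in pa_F A /\ in_semilinear (pa_C A) (psum v i).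

Definition RPA_accepts (Sigma : Type) (A : PA Sigma) (alpha : nat -> Sigma) : Prop :=
  exists p v, @is_run Sigma A alpha p v /\ @reach_cond Sigma A p v.

Definition RPBA_accepts (Sigma : Type) (A : PA Sigma) (alpha : nat -> Sigma) : Prop :=
  exists p v, @is_run Sigma A alpha p v /\ @reach_cond Sigma A p v /\
    (forall N, exists j, N <= j /\ p j \in pa_F A).

Definition RPA_recognizable (Sigma : finType) (L : (nat -> Sigma) -> Prop) : Prop :=
  exists A : PA Sigma, forall alpha, L alpha <-> RPA_accepts A alpha.

Definition RPBA_recognizable (Sigma : finType) (L : (nat -> Sigma) -> Prop) : Prop :=
  exists A : PA Sigma, forall alpha, L alpha <-> RPBA_accepts A alpha.

(* An RPA run accepts as soon as its reachability condition is met, so it is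
   simulated by an RPBA that, on a transition into F, may switch to a second
   copy of the automaton in which every state is accepting and no counter
   moves: the Büchi condition then holds for free and the counter value at the
   switch is preserved.  Conversely, "infinitely many trues" is recognized by a
   Büchi automaton with trivial counters but by no RPA: once an RPA run on a
   word with sparse trues has met its condition, a state repeated inside a
   true-free window lets us pump that window forever, and the resulting word,
   with finitely many trues, is still accepted. *)

From mathcomp Require Import all_boot zify.
From Stdlib Require Import IndefiniteDescription.
Set Implicit Arguments. Unset Strict Implicit. Unset Printing Implicit Defensive.

Definition vec0 {d : nat} : vec d := fun _ => 0.

Lemma psumS d (v : nat -> vec d) i c : psum v i.+1 c = psum v i c + v i c.
Proof. by rewrite /psum big_ord_recr. Qed.

Lemma eq_psum d (v w : nat -> vec d) i :
  (forall n, n < i -> v n = w n) -> psum v i =1 psum w i.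
Proof. by move=> vw c; apply: eq_bigr => j _; rewrite vw. Qed.

Lemma eq_in_semilinear d (C : seq (vec d * seq (vec d))) (f g : vec d) :
  f =1 g -> in_semilinear C f -> in_semilinear C g.
Proof. by move=> fg [L CL [z Lz]]; exists L => //; exists z => c; rewrite -fg. Qed.

Section LatchedRun.
Variables (d : nat) (latched final : nat -> bool) (u w : nat -> vec d).
Hypothesis latched0 : latched 0 = false.
Hypothesis latched_step : forall n, latched n -> latched n.+1 /\ u n = vec0.
Hypothesis unlatched_step :
  forall n, ~~ latched n -> u n = w n /\ (latched n.+1 -> final n.+1).

Lemma latched_mono m n : m <= n -> latched m -> latched n.
Proof.
move/subnK <-; elim: (n - m) => // k IH /IH.
by rewrite addSn => /latched_step [].
Qed.

Lemma psum_unlatched n : ~~ latched n -> psum u n =1 psum w n.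
Proof.
move=> un; apply: eq_psum => m lt_mn; apply: (proj1 (unlatched_step _)).
by apply: contra un; apply: latched_mono; apply: ltnW.
Qed.

Lemma psum_latched n :
  latched n -> exists2 k, 0 < k & final k /\ psum w k =1 psum u n.
Proof.
elim: n => [|n IH]; first by rewrite latched0.
case ln: (latched n) => lSn.
- have [k k_gt0 [fk wu]] := IH ln.
  exists k => //; split=> // c; rewrite psumS wu.
  by have [_ ->] := latched_step ln; rewrite addn0.
- have [un fS] := unlatched_step (negbT ln).
  exists n.+1 => //; split; first exact: fS.
  by move=> c; rewrite !psumS psum_unlatched ?ln // un.
Qed.

Lemma latched_reach C i :
  0 < i -> latched i || final i -> in_semilinear C (psum u i) ->
  exists k, 0 < k /\ final k /\ in_semilinear C (psum w k).
Proof.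
move=> i_gt0 hit uC; case li: (latched i) in hit.
- have [k k_gt0 [fk wu]] := psum_latched li.
  by exists k; do 2!split=> //; apply: eq_in_semilinear uC => c; rewrite wu.
- exists i; do 2!split=> //.
  by apply: eq_in_semilinear uC; apply: psum_unlatched; rewrite li.
Qed.
End LatchedRun.

Section Latch.
Variables (Sigma : Type) (A : PA Sigma).

Definition latch_tr (x : pa_Q A * Sigma * vec (pa_dim A) * pa_Q A) :=
  let: (q, a, w, q') := x in
  [:: ((q, false), a, w, (q', false)); ((q, true), a, vec0, (q', true))] ++
  (if q' \in pa_F A then [:: ((q, false), a, w, (q', true))] else [::]).

Definition latch : PA Sigma :=
  {| pa_dim := pa_dim A;
     pa_Q := (pa_Q A * bool)%type;
     pa_q0 := (pa_q0 A, false);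
     pa_Delta := List.flat_map latch_tr (pa_Delta A);
     pa_F := [set x | x.2 || (x.1 \in pa_F A)];
     pa_C := pa_C A |}.

Lemma in_latch_Delta (x y : pa_Q A * bool) a u :
  List.In (x, a, u, y) (pa_Delta latch) <->
  exists w, List.In (x.1, a, w, y.1) (pa_Delta A) /\
    if x.2 then y.2 /\ u = vec0 else u = w /\ (y.2 -> y.1 \in pa_F A).
Proof.
case: x y => q b [q' b'] /=; rewrite List.in_flat_map; split.
- case=> [[[[q1 a1] w] q1'] [tr]] /=.
  by case: ifP => F1 /=; do ?case=> [[<- <- <- <- <- <-]|]; exists w.
- case=> w [tr cond]; exists (q, a, w, q'); split=> //=.
  case: b b' cond => [] [] /= [] //.
  + by move=> _ ->; right; left.
  + by move=> -> /(_ isT) ->; right; right; left.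
  + by move=> -> _; left.
Qed.

Lemma RPA_accepts_latch alpha : RPA_accepts A alpha <-> RPBA_accepts latch alpha.
Proof.
split.
- move=> [p [v [[p0 run] [i [i_gt0 [pF vC]]]]]].
  exists (fun n => (p n, i <= n)), (fun n => if n < i then v n else vec0).
  split; [split | split; [exists i | move=> N]].
  + by rewrite p0 /= leqNgt i_gt0.
  + move=> n; apply/in_latch_Delta; exists (v n); split; first exact: run.
    case: leqP => [le_in | lt_ni] /=; first by split=> //; apply: leqW.
    by split=> // le_iSn; rewrite (@anti_leq n.+1 i) ?lt_ni.
  + split=> //; split; first by rewrite inE /= leqnn.
    by apply: eq_in_semilinear vC; apply: eq_psum => n ->.
  + by exists (maxn N i); rewrite leq_maxl inE /= leq_maxr.
- move=> [p [u [[p0 run] [[i [i_gt0 [pF uC]]] _]]]].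
  have /functional_choice [w wP] := fun n => iffLR (in_latch_Delta _ _ _ _) (run n).
  exists (fun n => (p n).1), w; split; first by split=> [|n]; [rewrite p0 | case: (wP n)].
  apply: (latched_reach (latched := fun n => (p n).2) (u := u)) i_gt0 _ uC.
  - by rewrite p0.
  - by move=> n /= ln; have [_] := wP n; rewrite ln.
  - by move=> n /= /negbTE ln; have [_] := wP n; rewrite ln.
  - by move: pF; rewrite inE.
Qed.
End Latch.

Definition infinitely_often (alpha : nat -> bool) : Prop :=
  forall N, exists2 k, N <= k & alpha k.

Definition last_letter_PA : PA bool :=
  {| pa_dim := 0;
     pa_Q := bool;
     pa_q0 := false;
     pa_Delta := [:: (false, false, vec0, false); (false, true, vec0, true);
                     (true, false, vec0, false); (true, true, vec0, true)];
     pa_F := [set true];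
     pa_C := [:: (vec0, [::])] |}.

Lemma in_last_letter_Delta q a u q' :
  List.In (q, a, u, q') (pa_Delta last_letter_PA) <-> q' = a /\ u = vec0.
Proof.
split; first by do ?case=> [[_ <- <- <-]|].
by case=> -> ->; case: q a => [] []; rewrite /=; tauto.
Qed.

Lemma RPBA_accepts_last_letter alpha :
  infinitely_often alpha <-> RPBA_accepts last_letter_PA alpha.
Proof.
split.
- move=> inf_alpha.
  pose p n := if n is k.+1 then alpha k else false.
  have p_inf N : exists j, N <= j /\ p j \in pa_F last_letter_PA.
    by have [k le_Nk ak] := inf_alpha N; exists k.+1; rewrite inE /= ak ltnW.
  exists p, (fun _ => vec0); split; [split=> // n | split=> //].
  + by apply/in_last_letter_Delta.
  + have [i [i_gt0 pi]] := p_inf 1; exists i; do 2!split=> //.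
    by exists (vec0, [::]); [left | exists (fun _ => 0); case].
- move=> [p [u [[_ run] [_ p_inf]]]] N.
  have [[|j] [le_Nj pj]] := p_inf N.+1; first by [].
  exists j => //; have [<- _] := iffLR (in_last_letter_Delta _ _ _ _) (run j).
  by move: pj; rewrite inE => /eqP.
Qed.

(* [alpha \o loop_index s t] reads [alpha] up to position [t], then repeats
   the factor [alpha s ... alpha t.-1] forever. *)
Fixpoint loop_index (s t k : nat) : nat :=
  if k is k'.+1 then
    let j := loop_index s t k' in if j.+1 == t then s else j.+1
  else 0.

Lemma loop_index_id s t k : k < t -> loop_index s t k = k.
Proof. by elim: k => //= k IH lt_kt; rewrite IH ?ltn_eqF // ltnW. Qed.

Lemma loop_index_lt s t k : s < t -> loop_index s t k < t.
Proof.
move=> lt_st; elim: k => [|k IH] /=; first exact: leq_ltn_trans lt_st.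
by case: eqP => // ne; lia.
Qed.

Lemma loop_index_ge s t k : s < t -> s <= k -> s <= loop_index s t k.
Proof.
move=> lt_st; elim: k => [|k IH]; first exact: id.
rewrite leq_eqVlt => /orP[/eqP eq_s | /IH le_s].
  by rewrite eq_s loop_index_id -?eq_s.
by rewrite /=; case: eqP => // _; apply: leqW.
Qed.

Lemma RPA_accepts_loop Sigma (A : PA Sigma) alpha (p : nat -> pa_Q A)
    (v : nat -> vec (pa_dim A)) i s t :
  is_run alpha p v -> 0 < i -> p i \in pa_F A ->
  in_semilinear (pa_C A) (psum v i) -> i <= s -> s < t -> p s = p t ->
  RPA_accepts A (alpha \o loop_index s t).
Proof.
move=> [p0 run] i_gt0 pF vC le_is lt_st pst.
have pS k : p (loop_index s t k.+1) = p (loop_index s t k).+1.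
  by rewrite /=; case: eqP => // ->.
exists (p \o loop_index s t), (v \o loop_index s t).
split; [split=> [|k] /= | exists i]; first exact: p0.
  by rewrite pS; apply: run.
rewrite /= loop_index_id; last exact: leq_ltn_trans lt_st.
do 2!split=> //; apply: eq_in_semilinear vC; apply: eq_psum => m lt_mi.
by rewrite /= loop_index_id //; lia.
Qed.

Lemma pigeonhole_window (T : finType) (f : nat -> T) b :
  exists s t, [/\ b <= s, s < t, t <= b + #|T| & f s = f t].
Proof.
pose g (j : 'I_#|T|.+1) := f (b + j).
have window (j1 j2 : 'I_#|T|.+1) : j1 < j2 -> g j1 = g j2 ->
    exists s t, [/\ b <= s, s < t, t <= b + #|T| & f s = f t].
  by move=> lt12 g12; exists (b + j1), (b + j2); split=> //; have := ltn_ord j2; lia.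
have /injectivePn [j1 [j2 ne12 g12]] : ~~ injectiveb g.
  by apply/injectiveP => /leq_card; rewrite card_ord ltnn.
case: (ltngtP j1 j2) => [lt12 | lt21 | /val_inj eq12].
- exact: window g12.
- exact: window lt21 (esym g12).
- by rewrite eq12 eqxx in ne12.
Qed.

Lemma infinitely_often_not_RPA : ~ RPA_recognizable infinitely_often.
Proof.
move=> [A AL].
pose n := #|pa_Q A|.
pose x k := k %% n.+1 == n.
have x_inf : infinitely_often x.
  move=> N; exists (N * n.+1 + n); first nia.
  by rewrite /x modnMDl modn_small.
have x_false b m : b * n.+1 <= m < b * n.+1 + n -> ~~ x m.
  case/andP=> le_bm lt_m; rewrite /x -(subnKC le_bm) modnMDl modn_small; lia.
have [p [v [[p0 run] [i [i_gt0 [pF vC]]]]]] := iffLR (AL x) x_inf.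
have [s [t [le_bs lt_st le_tn pst]]] := pigeonhole_window p (i * n.+1).
have le_is : i <= s by apply: leq_trans le_bs; apply: leq_pmulr.
have := RPA_accepts_loop (conj p0 run) i_gt0 pF vC le_is lt_st pst.
move=> /(iffRL (AL _)) /(_ t) [k le_tk /= xk].
have ge_s := loop_index_ge lt_st (leq_trans (ltnW lt_st) le_tk).
have lt_t : loop_index s t k < t := loop_index_lt k lt_st.
suff : ~~ x (loop_index s t k) by rewrite xk.
by apply: (x_false i); rewrite -/n in le_tn; lia.
Qed.

Theorem lemma2 :
  (forall (Sigma : finType) (L : (nat -> Sigma) -> Prop),
      RPA_recognizable L -> RPBA_recognizable L) /\
  (exists (Sigma : finType) (L : (nat -> Sigma) -> Prop),
      RPBA_recognizable L /\ ~ RPA_recognizable L).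
Proof.
split.
- move=> Sigma L [A LA]; exists (latch A) => alpha.
  by rewrite LA; apply: RPA_accepts_latch.
- exists bool, infinitely_often; split; last exact: infinitely_often_not_RPA.
  by exists last_letter_PA; apply: RPBA_accepts_last_letter.
Qed.
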